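(* Let $a\in\{0,\dots,m\}$, $b\in\{0,\dots,n\}$. For each $k=1,\dots,p$ write the dominant of $\boldsymbol A_k\sqcup\boldsymbol B_k$ as $0=c^{(k)}_{a+b}<c^{(k)}_{a+b-1}+1<\dots<c^{(k)}_{a+b-j}+j<\dots<c^{(k)}_1+a+b-1$ (this defines integers $c^{(k)}_1,\dots,c^{(k)}_{a+b}$), let $\tilde z_k=z_k+\lambda^{(k)}_{m+1}h$ and $\mathscr T_i(x)=\prod_{k=1}^p\prod_{j=1}^{c^{(k)}_i}(x-\tilde z_k+jh)$. Then \[\pi_{a,b}\prod_{j=1}^a\mathscr T_j[j]=\prod_{i=1}^a\big(T_{m-a+i}[b+i]\,T_{m+1}[i-1]\big).\]
   Context: Fix $h\in\mathbb{C}^\times$; $f[i](x)=f(x-ih)$. Polynomial $\mathfrak{gl}_{m|n}$ weights: $\lambda\in\mathbb{Z}^{m+n}_{\ge0}$, $\lambda_1\ge\dots\ge\lambda_m$, $\lambda_{m+1}\ge\dots\ge\lambda_{m+n}$, $\lambda_{m+k}=0$ for $k>\lambda_m$. Let $\boldsymbol\lambda=(\lambda^{(1)},\dots,\lambda^{(p)})$ be polynomial weights and $\boldsymbol z=(z_1,\dots,z_p)$ $h$-generic ($z_i-z_j\notin h\mathbb{Z}$, $i\ne j$). $T_i(x)=\prod_{k=1}^p\prod_{j=1}^{\lambda^{(k)}_i}(x-z_k+s_ijh)$ with $s_i=1$ for $i\le m$ and $s_i=-1$ for $i>m$. $\pi_{a,b}(x)=\prod_{k=1}^p\prod_{i=1}^a\prod_{j=1}^{\min\{b,\lambda^{(k)}_{m-i+1}\}}(x-z_k+(i+j-a-b-1)h)$.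 For each $k$: $\boldsymbol A_k=\{\lambda^{(k)}_{m-r+1}+\lambda^{(k)}_{m+1}+r-1\}_{r=1}^a$ and $\boldsymbol B_k=\{\lambda^{(k)}_{m+1}-\lambda^{(k)}_{m+r}+r-1\}_{r=1}^b$. Partitions with $r$ parts are weakly increasing sequences of nonnegative integers (multisets are sorted into partitions, $\sqcup$ is multiset union); $\boldsymbol b$ dominates $\boldsymbol a$ if $b_i\ge a_i$ for all $i$; the dominant of $\boldsymbol a$ is the smallest (with respect to dominance) partition with $r$ distinct parts dominating $\boldsymbol a$. *)

From HB Require Import structures.
From mathcomp Require Import all_boot all_order all_algebra.
From mathcomp Require Import complex.
From mathcomp Require Import reals.
Set Implicit Arguments. Unset Strict Implicit. Unset Printing Implicit Defensive.
Import Order.TTheory GRing.Theory Num.Theory.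
Local Open Scope ring_scope.

(* 1-indexed component lambda_i of a weight given as a seq of length m+n
   (components out of range read as 0). *)
Definition wt (l : seq nat) (i : nat) : nat := nth 0%N l i.-1.

Definition is_poly_weight (m n : nat) (l : seq nat) : Prop :=
  [/\ size l = (m + n)%N,
      (forall i, (1 <= i)%N -> (i < m)%N -> (wt l (i.+1) <= wt l i)%N),
      (forall i, (m + 1 <= i)%N -> (i < m + n)%N -> (wt l (i.+1) <= wt l i)%N)
    & (forall k, (0 < m)%N -> (1 <= k <= n)%N -> (wt l m < k)%N -> wt l (m + k) = 0%N)].

(* f[i](x) = f(x - i h) *)
Definition shiftp (C : fieldType) (h : C) (f : {poly C}) (i : nat) : {poly C} :=
  f \Po ('X - (i%:R * h)%:P).

Definition sgn_s (m i : nat) : int := if (i <= m)%N then 1%Z else (-1)%Z.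

Definition Tpoly (C : fieldType) (h : C) (m p : nat) (lam : 'I_p -> seq nat)
    (z : 'I_p -> C) (i : nat) : {poly C} :=
  \prod_(k < p) \prod_(1 <= j < (wt (lam k) i).+1)
      ('X - (z k)%:P + ((sgn_s m i * j%:Z)%:~R * h)%:P).

Definition pipoly (C : fieldType) (h : C) (m p : nat) (lam : 'I_p -> seq nat)
    (z : 'I_p -> C) (a b : nat) : {poly C} :=
  \prod_(k < p) \prod_(1 <= i < a.+1)
    \prod_(1 <= j < (minn b (wt (lam k) (m - i + 1))).+1)
      ('X - (z k)%:P + (((i + j)%:Z - (a + b + 1)%:Z)%:~R * h)%:P).

Definition Aset (m : nat) (l : seq nat) (a : nat) : seq nat :=
  [seq (wt l (m - r + 1) + wt l (m + 1) + r - 1)%N | r <- iota 1 a].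
Definition Bset (m : nat) (l : seq nat) (b : nat) : seq nat :=
  [seq (wt l (m + 1) - wt l (m + r) + r - 1)%N | r <- iota 1 b].

(* partitions: weakly increasing sequences of naturals *)
Definition dominates (bb aa : seq nat) : Prop :=
  size bb = size aa /\ forall i, (i < size aa)%N -> (nth 0 aa i <= nth 0 bb i)%N.

Definition distinct_partition (d : seq nat) : Prop := sorted ltn d.

Definition is_dominant (aa d : seq nat) : Prop :=
  [/\ distinct_partition d, dominates d aa &
      forall d', distinct_partition d' -> dominates d' aa -> dominates d' d].

Definition h_generic (C : fieldType) (h : C) (p : nat) (z : 'I_p -> C) : Prop :=
  forall i j : 'I_p, i != j -> forall t : int, z i - z j != t%:~R * h.

Definition scrT (C : fieldType) (h : C) (m p : nat) (lam : 'I_p -> seq nat)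
    (z : 'I_p -> C) (c : 'I_p -> nat -> nat) (i : nat) : {poly C} :=
  \prod_(k < p) \prod_(1 <= j < (c k i).+1)
      ('X - (z k + (wt (lam k) (m + 1))%:R * h)%:P + (j%:R * h)%:P).

From HB Require Import structures.
From mathcomp Require Import all_boot all_order all_algebra.
From mathcomp Require Import complex.
From mathcomp Require Import reals.
From mathcomp Require Import zify ring.
Import Order.TTheory GRing.Theory Num.Theory.
Set Implicit Arguments. Unset Strict Implicit. Unset Printing Implicit Defensive.

(* Fix k and write nu = lambda_(m+1), alpha_r = lambda_(m-r+1).  The dominant of
   A_k \sqcup B_k is nu, nu+1, ..., nu+b-1 followed by
   max(alpha_r, b) + nu + r - 1 for r = 1..a, so that
   c_(a+1-r) = max(alpha_r, b) + nu - b.  Both sides of the identity are then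
   products of runs of consecutive factors x - z_k + t h, and for each k and r
   the left side has runs of lengths min(b, alpha_r) and c_(a+1-r) where the
   right side has alpha_r and nu, meeting at the same point t = r - a - 1;
   shifting the max(alpha_r - b, 0) middle factors from one run to the other
   proves the identity. *)

Lemma sorted_nth_count (P : pred nat) (s : seq nat) i :
  sorted leq s -> i < size s -> (forall x y, x <= y -> P y -> P x) ->
  P (nth 0 s i) = (i < count P s).
Proof.
elim: s i => [|y s IH] i //= sorted_ys lt_i P_down.
have [Py | nPy] := boolP (P y).
  by case: i lt_i => [|i] lt_i //=; rewrite IH // (path_sorted sorted_ys).
have nP : {in s, forall x, ~~ P x}.
  move=> x xs; apply: contra nPy; apply: P_down.
  exact: (allP (order_path_min leq_trans sorted_ys)).
have -> : count P s = 0.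
  by rewrite (@eq_in_count _ _ pred0) ?count_pred0 // => x /nP/negbTE.
rewrite ltn0; case: i lt_i => [|i] lt_i /=; first exact: negbTE.
by apply/negbTE/nP/mem_nth.
Qed.

Lemma sorted_nth_leq (s : seq nat) x i :
  sorted leq s -> i < count (fun y => y <= x) s -> nth 0 s i <= x.
Proof.
move=> sorted_s lt_i; have lt_size : i < size s := leq_trans lt_i (count_size _ _).
rewrite (@sorted_nth_count (fun y => y <= x) _ _ sorted_s lt_size) //.
by move=> y y' le_yy' /(leq_trans le_yy').
Qed.

Lemma sorted_nth_geq (s : seq nat) x i :
  sorted leq s -> i < size s -> size s - i <= count (fun y => x <= y) s ->
  x <= nth 0 s i.
Proof.
move=> sorted_s lt_i cnt.
rewrite leqNgt (@sorted_nth_count (fun y => y < x) _ _ sorted_s lt_i); last first.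
  by move=> y y' le_yy' /(leq_ltn_trans le_yy').
have : count (fun y => y < x) s + count (fun y => x <= y) s = size s.
  rewrite -(count_predC (fun y => y < x)); congr (_ + _).
  by apply: eq_count => y /=; rewrite leqNgt.
lia.
Qed.

Lemma leq_count_iota (P : pred nat) m n i k :
  m <= i -> i + k <= m + n -> (forall j, i <= j < i + k -> P j) ->
  k <= count P (iota m n).
Proof.
move=> le_mi le_ik_mn Pj.
have -> : n = (i - m) + (k + (m + n - i - k)) by lia.
rewrite iotaD iotaD !count_cat subnKC //.
have -> : count P (iota i k) = k.
  rewrite -[RHS](size_iota i k) -count_predT.
  by apply: eq_in_count => j; rewrite mem_iota => /Pj ->.
lia.
Qed.

Lemma sorted_ltn_nth_gap (D : seq nat) i j :
  sorted ltn D -> i <= j -> j < size D -> nth 0 D i + (j - i) <= nth 0 D j.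
Proof.
move=> /(sortedP 0) D_incr; elim: j => [|j IH] le_ij lt_j.
  by rewrite leqn0 in le_ij; rewrite (eqP le_ij) addn0.
case: (ltngtP i j.+1) le_ij => // [lt_ij | ->] _; last by rewrite subnn addn0.
have := D_incr j lt_j; have := IH (ltnSE lt_ij) (ltnW lt_j); lia.
Qed.

Lemma dominant_nth_geq (s D : seq nat) i j :
  is_dominant s D -> i <= j -> j < size s -> nth 0 s i + (j - i) <= nth 0 D j.
Proof.
move=> [D_distinct [size_D D_dom] _] le_ij lt_j.
have lt_jD : j < size D by rewrite size_D.
have := sorted_ltn_nth_gap D_distinct le_ij lt_jD.
have := D_dom i (leq_ltn_trans le_ij lt_j); lia.
Qed.

Lemma poly_weight_antimono m n l i j :
  is_poly_weight m n l -> 1 <= i <= j -> j <= m -> wt l j <= wt l i.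
Proof.
move=> [_ decr _ _] /andP[i_gt0]; elim: j => [|j IH] le_ij le_jm; first lia.
case: (ltngtP i j.+1) le_ij => // [lt_ij | ->] _; last by [].
apply: leq_trans (decr j _ _) (IH _ _); lia.
Qed.

Section DominantOfAB.
Variables (m n a b : nat) (l : seq nat).
Hypotheses (wl : is_poly_weight m n l) (le_am : a <= m) (le_bn : b <= n).

Local Notation nu := (wt l (m + 1)).
Local Notation alpha r := (wt l (m - r + 1)).
Let s := sort leq (Aset m l a ++ Bset m l b).
Let G r := maxn (alpha r) b + nu + r - 1.

Let alpha_mono r1 r2 : 1 <= r1 <= r2 -> r2 <= a -> alpha r1 <= alpha r2.
Proof. by move=> r12 le_r2a; apply: (poly_weight_antimono wl); lia. Qed.

Let size_s : size s = a + b.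
Proof. by rewrite size_sort size_cat !size_map !size_iota. Qed.

Let sorted_s : sorted leq s.
Proof. exact: (sort_sorted leq_total). Qed.

Let count_s (P : pred nat) : count P s =
  count (fun r => P (alpha r + nu + r - 1)) (iota 1 a) +
  count (fun r => P (nu - wt l (m + r) + r - 1)) (iota 1 b).
Proof. by rewrite (permP (permEl (perm_sort leq _))) count_cat !count_map. Qed.

Let cand := mkseq (fun p => if p < b then nu + p else G (p - b + 1)) (a + b).

Let cand_distinct : distinct_partition cand.
Proof.
apply/(sortedP 0) => i; rewrite size_mkseq => lt_i; rewrite !nth_mkseq; try lia.
case: (ltnP i.+1 b) => [lt_i1b | le_bi1]; first by rewrite ifT; lia.
case: (ltnP i b) => [lt_ib | le_bi].
  by rewrite /G (_ : i.+1 - b + 1 = 1); lia.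
have : alpha (i - b + 1) <= alpha (i.+1 - b + 1) by apply: alpha_mono; lia.
rewrite /G; lia.
Qed.

Let cand_dominates : dominates cand s.
Proof.
split=> [|i]; first by rewrite size_mkseq size_s.
rewrite size_s => lt_i; rewrite nth_mkseq //.
apply: sorted_nth_leq => //; rewrite count_s.
case: (ltnP i b) => [lt_ib | le_bi].
  have : i.+1 <= count (fun r => nu - wt l (m + r) + r - 1 <= nu + i) (iota 1 b).
    by apply: (@leq_count_iota _ _ _ 1) => *; lia.
  lia.
have : i - b + 1 <= count (fun r => alpha r + nu + r - 1 <= G (i - b + 1)) (iota 1 a).
  apply: (@leq_count_iota _ _ _ 1) => [||j rng_j]; try lia.
  have : alpha j <= alpha (i - b + 1) by apply: alpha_mono; lia.
  rewrite /G; lia.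
have : b <= count (fun r => nu - wt l (m + r) + r - 1 <= G (i - b + 1)) (iota 1 b).
  by apply: (@leq_count_iota _ _ _ 1) => *; rewrite /G; lia.
lia.
Qed.

Let G_le_dominant D r : is_dominant s D -> 1 <= r <= a -> G r <= nth 0 D (b + r - 1).
Proof.
move=> domD rng_r.
have lt_br : b + r - 1 < size s by rewrite size_s; lia.
case: (leqP b (alpha r)) => [le_b_alpha | lt_alpha_b].
  apply: leq_trans (dominant_nth_geq domD (leqnn _) lt_br); rewrite subnn addn0.
  apply: sorted_nth_geq => //; rewrite count_s size_s.
  have : a - r + 1 <= count (fun j => G r <= alpha j + nu + j - 1) (iota 1 a).
    apply: (@leq_count_iota _ _ _ r) => [||j rng_j]; try lia.
    have : alpha r <= alpha j by apply: alpha_mono; lia.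
    rewrite /G; lia.
  lia.
(* Parts of B beyond lambda_m are nu + j - 1, so s_q >= nu + q for q = lambda_m. *)
have [_ _ _ weight_tail] := wl.
set q := wt l m.
have alpha1 : alpha 1 = q by rewrite subnK //; lia.
have le_q_alpha : q <= alpha r by rewrite -alpha1; apply: alpha_mono; lia.
have le_q_br : q <= b + r - 1 by lia.
apply: leq_trans (dominant_nth_geq domD le_q_br lt_br).
have : nu + q <= nth 0 s q.
  apply: sorted_nth_geq => //; first by rewrite size_s; lia.
  rewrite count_s size_s.
  have : a <= count (fun j => nu + q <= alpha j + nu + j - 1) (iota 1 a).
    apply: (@leq_count_iota _ _ _ 1) => // j rng_j.
    have : alpha 1 <= alpha j by apply: alpha_mono; lia.
    rewrite alpha1; lia.
  have : b - q <= count (fun j => nu + q <= nu - wt l (m + j) + j - 1) (iota 1 b).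
    apply: (@leq_count_iota _ _ _ q.+1) => [||j rng_j]; try lia.
    have : wt l (m + j) = 0 by apply: weight_tail; lia.
    lia.
  lia.
rewrite /G; lia.
Qed.

Lemma dominant_AB_c (c : nat -> nat) :
  is_dominant s [seq c (a + b - j) + j | j <- iota 0 (a + b)] ->
  forall r, 1 <= r <= a -> c (a + 1 - r) = maxn (alpha r) b + nu - b.
Proof.
move=> domD r rng_r.
have lt_br : b + r - 1 < a + b by lia.
have : nth 0 [seq c (a + b - j) + j | j <- iota 0 (a + b)] (b + r - 1) = G r.
  apply/eqP; rewrite eqn_leq G_le_dominant // andbT.
  have [_ _ minD] := domD; have [_ le_cand] := minD _ cand_distinct cand_dominates.
  have cand_br : nth 0 cand (b + r - 1) = G r.
    by rewrite nth_mkseq // ifF; [congr G | ]; lia.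
  by rewrite -cand_br le_cand // size_map size_iota.
rewrite (nth_map 0) ?size_iota // nth_iota // add0n.
have -> : a + b - (b + r - 1) = a + 1 - r by lia.
rewrite /G; lia.
Qed.

End DominantOfAB.

Local Open Scope ring_scope.

Lemma shiftp_prod (C : fieldType) (h : C) (I : Type) (r : seq I) (P : pred I)
    (F : I -> {poly C}) (k : nat) :
  shiftp h (\prod_(i <- r | P i) F i) k = \prod_(i <- r | P i) shiftp h (F i) k.
Proof. exact: rmorph_prod. Qed.

Section HFactors.
Variables (C : fieldType) (h z : C).

Definition hfactor (t : int) : {poly C} := 'X - z%:P + (t%:~R * h)%:P.

Definition hfactors (u : int) (L : nat) : {poly C} :=
  \prod_(1 <= j < L.+1) hfactor (u + j%:Z).

Lemma shiftp_hfactor t (i : nat) : shiftp h (hfactor t) i = hfactor (t - i%:Z).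
Proof.
rewrite /shiftp /hfactor comp_polyD comp_polyB comp_polyX !comp_polyC.
rewrite intrB pmulrn mulrBl polyCB; ring.
Qed.

Lemma hfactorsD u L1 L2 :
  hfactors u (L1 + L2) = hfactors u L1 * hfactors (u + L1%:Z) L2.
Proof.
rewrite /hfactors (big_cat_nat (n := L1.+1)) //=; last by rewrite ltnS leq_addr.
congr (_ * _); rewrite -{1}[L1.+1]add1n big_addn.
have -> : ((L1 + L2).+1 - L1 = L2.+1)%N by lia.
by apply: eq_bigr => j _; congr hfactor; rewrite PoszD addrAC addrA.
Qed.

Lemma hfactors_minn_maxn v w (b al nu : nat) : v + b%:Z = w + nu%:Z ->
  hfactors v (minn b al) * hfactors w (maxn al b + nu - b) =
  hfactors v al * hfactors w nu.
Proof.
move=> vb_wnu; case: (leqP al b) => [le_al_b | lt_b_al].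
  by rewrite (_ : (b + nu - b = nu)%N); last lia.
rewrite (_ : (al + nu - b = nu + (al - b))%N); last lia.
rewrite -(subnKC (ltnW lt_b_al)) hfactorsD addKn hfactorsD vb_wnu.
by rewrite mulrA mulrAC.
Qed.

End HFactors.

Section Expansions.
Variables (C : fieldType) (h : C) (m p : nat) (lam : 'I_p -> seq nat) (z : 'I_p -> C).

Lemma pipoly_hfactors a b :
  pipoly h m lam z a b = \prod_(1 <= i < a.+1) \prod_(k < p)
    hfactors h (z k) (i%:Z - (a + b + 1)%:Z) (minn b (wt (lam k) (m - i + 1))).
Proof.
rewrite /pipoly exchange_big; apply: eq_bigr => i _; apply: eq_bigr => k _.
by apply: eq_bigr => j _; congr hfactor; lia.
Qed.

Lemma shiftp_scrT (c : 'I_p -> nat -> nat) i (e : nat) :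
  shiftp h (scrT h m lam z c i) e =
  \prod_(k < p) hfactors h (z k) (- (wt (lam k) (m + 1))%:Z - e%:Z) (c k i).
Proof.
rewrite shiftp_prod; apply: eq_bigr => k _; rewrite shiftp_prod; apply: eq_bigr => j _.
set nu := wt (lam k) (m + 1).
have -> : 'X - (z k + nu%:R * h)%:P + (j%:R * h)%:P = hfactor h (z k) (j%:Z - nu%:Z).
  by rewrite /hfactor intrB !pmulrn mulrBl polyCD polyCB; ring.
by rewrite shiftp_hfactor; congr hfactor; lia.
Qed.

Lemma shiftp_Tpoly_le i (e : nat) : (i <= m)%N ->
  shiftp h (Tpoly h m lam z i) e =
  \prod_(k < p) hfactors h (z k) (- e%:Z) (wt (lam k) i).
Proof.
move=> le_im; rewrite /Tpoly; have -> : sgn_s m i = 1 by rewrite /sgn_s le_im.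
rewrite shiftp_prod; apply: eq_bigr => k _.
rewrite shiftp_prod; apply: eq_bigr => j _.
by rewrite mul1r -[_ + (_ * h)%:P]/(hfactor h (z k) j) shiftp_hfactor; congr hfactor; lia.
Qed.

Lemma shiftp_Tpoly_gt i (e : nat) : (m < i)%N ->
  shiftp h (Tpoly h m lam z i) e =
  \prod_(k < p) hfactors h (z k) (- (wt (lam k) i).+1%:Z - e%:Z) (wt (lam k) i).
Proof.
move=> lt_mi; rewrite /Tpoly; have -> : sgn_s m i = -1 by rewrite /sgn_s leqNgt lt_mi.
rewrite shiftp_prod; apply: eq_bigr => k _.
rewrite shiftp_prod big_nat_rev; apply: eq_big_nat => j /andP[j_gt0 lt_j].
rewrite -[_ + (_ * h)%:P]/(hfactor h (z k) _) shiftp_hfactor; congr hfactor; lia.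
Qed.

End Expansions.

Lemma pipoly_scrT_identity (C : fieldType) (h : C) (m p : nat) (lam : 'I_p -> seq nat)
    (z : 'I_p -> C) (a b : nat) (c : 'I_p -> nat -> nat) :
  (a <= m)%N ->
  (forall k r, (1 <= r <= a)%N ->
     c k (a + 1 - r)%N = (maxn (wt (lam k) (m - r + 1)) b + wt (lam k) (m + 1) - b)%N) ->
  pipoly h m lam z a b * \prod_(1 <= j < a.+1) shiftp h (scrT h m lam z c j) j
  = \prod_(1 <= i < a.+1)
      (shiftp h (Tpoly h m lam z (m - a + i)) (b + i) *
       shiftp h (Tpoly h m lam z (m + 1)) (i - 1)).
Proof.
move=> le_am c_val.
rewrite pipoly_hfactors [X in _ * X]big_nat_rev [RHS]big_nat_rev -big_split.
apply: eq_big_nat => r /andP[r_gt0 lt_ra].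
have -> : (1 + a.+1 - r.+1 = a + 1 - r)%N by lia.
have -> : (m - a + (a + 1 - r) = m - r + 1)%N by lia.
have le_alpha_m : (m - r + 1 <= m)%N by lia.
have lt_m_m1 : (m < m + 1)%N by rewrite addn1.
rewrite shiftp_scrT shiftp_Tpoly_le // shiftp_Tpoly_gt // -!big_split.
apply: eq_bigr => k _ /=; rewrite c_val; last lia.
set nu := wt (lam k) (m + 1).
rewrite (_ : r%:Z - (a + b + 1)%:Z = - (b + (a + 1 - r))%:Z); last lia.
rewrite (_ : - nu%:Z - (a + 1 - r)%:Z = - nu.+1%:Z - (a + 1 - r - 1)%:Z); last lia.
by apply: hfactors_minn_maxn; lia.
Qed.

Theorem proposition6p5 (R : realType) (m n p : nat) (h : R[i])
    (lam : 'I_p -> seq nat) (z : 'I_p -> R[i]) (a b : nat)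
    (c : 'I_p -> nat -> nat) :
  h != 0 ->
  (forall k, is_poly_weight m n (lam k)) ->
  h_generic h z ->
  (a <= m)%N -> (b <= n)%N ->
  (forall k : 'I_p,
     is_dominant (sort leq (Aset m (lam k) a ++ Bset m (lam k) b))
                 [seq (c k (a + b - j)%N + j)%N | j <- iota 0 (a + b)]) ->
  pipoly h m lam z a b *
    \prod_(1 <= j < a.+1) shiftp h (scrT h m lam z c j) j
  = \prod_(1 <= i < a.+1)
      (shiftp h (Tpoly h m lam z (m - a + i)) (b + i) *
       shiftp h (Tpoly h m lam z (m + 1)) (i - 1)).
Proof.
move=> _ weights _ le_am le_bn dominant_c.
apply: pipoly_scrT_identity => // k.
exact: (dominant_AB_c (weights k) le_am le_bn (dominant_c k)).
Qed.
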